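(* In the construction described in the context, the set $L_\infty:=\bigcup_{k\in\mathbb{N}}i_k(L_k)$ is dense in $(P_\infty,\rho_\infty)$.
   Context: Construction. Let $(e_n)$ be the canonical basis of $\ell^1(\mathbb{N})$; $\alpha(t)=t$ on $[0,\frac12]$, $\alpha(t)=1-t$ on $[\frac12,1]$; $S_n=\{te_1+\alpha(t)e_{n+1}:t\in[0,1]\}$; $x_n=(\frac12-\frac1{2^n})e_1$, $x_\infty=\frac12e_1$; $Y=\bigcup_{n\ge1}(2^{-(n+1)}S_n+x_n)\cup\{x_\infty\}$ with the $\ell^1$ metric $\theta$. $Y$ is the image of an arc-length parametrized injective curve $\gamma:[0,1]\to Y$ with $\gamma(0)=0$, $\gamma(1)=x_\infty$. For $r>0$ let $\theta_r(s,t)=r\,\theta(\gamma(s/r),\gamma(t/r))$ on $[0,r]$. Set $P_1=[0,1]$, $\rho_1=\theta_1$, $L_1=\{1\}$. Given $(P_k,\rho_k)$ with $P_k\subset[0,1]^k$ and $L_k\subset P_k$, let $\pi_k$ denote the $k$-th coordinate, choose a countable dense subset $Q_k=\{q_n:n\in\mathbb{N}\}$ (distinct $q_n$) of $P_k\setminus L_k$ with $\pi_k$ injective on $Q_k$ and $0\notin\pi_k(Q_k)$, set $r_n=2^{-(n+k)}$, $d_n=\theta_{r_n}$, and let $P_{k+1}=\{(x,0):x\in P_k\setminus Q_k\}\cup\{(q_n,y):n\in\mathbb{N},y\in[0,r_n]\}\subset[0,1]^{k+1}$ with metric $\rho_{k+1}((x_1,y_1),(x_2,y_2))$ equal to $d_n(y_1,y_2)$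 if $x_1=x_2=q_n$; $d_n(y_1,0)+\rho_k(x_1,x_2)+d_m(0,y_2)$ if $x_1=q_n,x_2=q_m$, $n\ne m$; $d_n(y_1,0)+\rho_k(x_1,x_2)$ if $x_1=q_n$, $x_2\notin Q_k$ (and symmetrically); $\rho_k(x_1,x_2)$ if $x_1,x_2\notin Q_k$. Let $L_{k+1}=(L_k\times\{0\})\cup\{(q_n,r_n):n\in\mathbb{N}\}$. Let $i_k:P_k\to[0,1]^{\mathbb{N}}$, $i_k(x)=(x_1,\dots,x_k,0,0,\dots)$; $\mathcal P_\infty=\bigcup_k i_k(P_k)$ with the metric $\rho_\infty(x,y)=\rho_k(i_k^{-1}x,i_k^{-1}y)$ for $x,y\in i_k(P_k)$; $(P_\infty,\rho_\infty)$ is the completion of $(\mathcal P_\infty,\rho_\infty)$. *)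

From Stdlib Require Import Reals Lra Arith ClassicalEpsilon.
From Coquelicot Require Import Coquelicot.
Open Scope R_scope.

(* Points of l^1(N) and of [0,1]^N are represented as sequences nat -> R.
   Index convention: the paper's basis vector e_j (j >= 1) / coordinate j
   is the Rocq index j-1. *)
Definition pt := nat -> R.

Definition dec (P : Prop) : bool :=
  if excluded_middle_informative P then true else false.

Definition theta (a b : pt) : R := Series (fun i => Rabs (a i - b i)).

(* canonical basis: e j = e_{j+1} of the paper *)
Definition e (j : nat) : pt := fun i => if Nat.eqb i j then 1 else 0.

Definition alpha (t : R) : R := if Rle_dec t (1/2) then t else 1 - t.

Definition xn (n : nat) : pt := fun i => (1/2 - / 2 ^ n) * e 0 i.
Definition xinf : pt := fun i => (1/2) * e 0 i.

Definition piece (n : nat) (t : R) : pt :=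
  fun i => xn n i + / 2 ^ (n + 1) * (t * e 0 i + alpha t * e n i).

(* gamma : the arc-length parametrized injective curve onto Y with
   gamma(0) = 0, gamma(1) = x_infty.  The piece 2^{-(n+1)} S_n + x_n has
   l^1-length 2^{-n} and is traversed for s in [1 - 2^{-(n-1)}, 1 - 2^{-n}]. *)
Definition gamma (s : R) : pt :=
  if Rlt_dec s 1 then
    let n := epsilon (inhabits 1%nat)
               (fun n => (1 <= n)%nat /\ 1 - / 2 ^ (n - 1) <= s < 1 - / 2 ^ n) in
    piece n (2 ^ n * (s - (1 - / 2 ^ (n - 1))))
  else xinf.

Definition theta_r (r s t : R) : R := r * theta (gamma (s / r)) (gamma (t / r)).

(* The choice data: q m n is the paper's q_{n+1} at stage k = m+1
   (Q_k = {q_n : n in N}).  Stage m (Rocq) is stage k = m+1 (paper); points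
   of P_k are encoded by i_k, i.e. as sequences vanishing at indices >= k. *)
Definition choice_data := nat -> nat -> pt.

(* r_n = 2^{-(n+k)} with paper n = n0+1, k = m+1 *)
Definition rr (m n0 : nat) : R := / 2 ^ (n0 + m + 2).

Definition trunc (c : nat) (x : pt) : pt := fun j => if Nat.ltb j c then x j else 0.

Definition inQ (q : choice_data) (m : nat) (z : pt) : Prop := exists n, z = q m n.
Definition idxQ (q : choice_data) (m : nat) (z : pt) : nat :=
  epsilon (inhabits 0%nat) (fun n => z = q m n).

Definition P1 (x : pt) : Prop := 0 <= x 0%nat <= 1 /\ forall j, (1 <= j)%nat -> x j = 0.
Definition rho1 (x y : pt) : R := theta_r 1 (x 0%nat) (y 0%nat).
Definition L1 (x : pt) : Prop := x 0%nat = 1 /\ forall j, (1 <= j)%nat -> x j = 0.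

Definition Pnext (q : choice_data) (m : nat) (P : pt -> Prop) (x : pt) : Prop :=
  (forall j, (m + 1 < j)%nat -> x j = 0) /\
  ((x (m + 1)%nat = 0 /\ P (trunc (m + 1) x) /\ ~ inQ q m (trunc (m + 1) x)) \/
   (exists n, trunc (m + 1) x = q m n /\ 0 <= x (m + 1)%nat <= rr m n)).

Definition rhonext (q : choice_data) (m : nat) (rho : pt -> pt -> R) (x y : pt) : R :=
  let x' := trunc (m + 1) x in
  let y' := trunc (m + 1) y in
  let x2 := x (m + 1)%nat in
  let y2 := y (m + 1)%nat in
  let nx := idxQ q m x' in
  let ny := idxQ q m y' in
  if dec (inQ q m x') then
    if dec (inQ q m y') then
      if dec (x' = y') then theta_r (rr m nx) x2 y2
      else theta_r (rr m nx) x2 0 + rho x' y' + theta_r (rr m ny) 0 y2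
    else theta_r (rr m nx) x2 0 + rho x' y'
  else
    if dec (inQ q m y') then rho x' y' + theta_r (rr m ny) 0 y2
    else rho x' y'.

Definition Lnext (q : choice_data) (m : nat) (L : pt -> Prop) (x : pt) : Prop :=
  (forall j, (m + 1 < j)%nat -> x j = 0) /\
  ((x (m + 1)%nat = 0 /\ L (trunc (m + 1) x)) \/
   (exists n, trunc (m + 1) x = q m n /\ x (m + 1)%nat = rr m n)).

Fixpoint stage (q : choice_data) (m : nat)
  : (pt -> Prop) * (pt -> pt -> R) * (pt -> Prop) :=
  match m with
  | O => (P1, rho1, L1)
  | S m' =>
      let '(P, rho, L) := stage q m' in
      (Pnext q m' P, rhonext q m' rho, Lnext q m' L)
  end.

Definition Pk (q : choice_data) (m : nat) : pt -> Prop := fst (fst (stage q m)).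
Definition rhok (q : choice_data) (m : nat) : pt -> pt -> R := snd (fst (stage q m)).
Definition Lk (q : choice_data) (m : nat) : pt -> Prop := snd (stage q m).

Definition admissible (q : choice_data) : Prop :=
  forall m : nat,
    (forall n, Pk q m (q m n) /\ ~ Lk q m (q m n)) /\
    (forall n n', q m n = q m n' -> n = n') /\
    (forall x, Pk q m x -> ~ Lk q m x ->
       forall eps, 0 < eps -> exists n, rhok q m x (q m n) < eps) /\
    (forall n n', q m n m = q m n' m -> q m n = q m n') /\
    (forall n, q m n m <> 0).

Definition Pinf_pre (q : choice_data) (x : pt) : Prop := exists m, Pk q m x.
Definition rho_inf (q : choice_data) (x y : pt) : R :=
  rhok q (epsilon (inhabits 0%nat) (fun m => Pk q m x /\ Pk q m y)) x y.
Definition Linf (q : choice_data) (x : pt) : Prop := exists m, Lk q m x.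

(* The completion (P_infty, rho_infty): Cauchy sequences in calP_infty,
   at distance lim_j rho_infty(u_j, v_j); calP_infty embeds as constant
   sequences. *)
Definition cauchy_in (q : choice_data) (u : nat -> pt) : Prop :=
  (forall j, Pinf_pre q (u j)) /\
  forall eps, 0 < eps -> exists N, forall i j, (N <= i)%nat -> (N <= j)%nat ->
    rho_inf q (u i) (u j) < eps.

Definition completion_dist (q : choice_data) (u v : nat -> pt) : R :=
  real (Lim_seq (fun j => rho_inf q (u j) (v j))).

Definition embed (x : pt) : nat -> pt := fun _ => x.

Definition dense_in_completion (q : choice_data) (S : pt -> Prop) : Prop :=
  forall u, cauchy_in q u -> forall eps, 0 < eps ->
    exists l, S l /\ completion_dist q (embed l) u < eps.

From Stdlib Require Import Reals Lra Lia ClassicalEpsilon FunctionalExtensionality.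
From Coquelicot Require Import Coquelicot.
Open Scope R_scope.

(* Each rho_k is a pseudometric, since rho_(k+1) glues the arcs theta_(r_n) onto rho_k at
   the points q_n; and rho_infinity is rho_k on P_k.  A Cauchy sequence is eventually within
   eps/4 of one of its terms x, which lies in some P_m.  At a late stage M, either x is
   already in L_M, or x is not in L_M and is close to some q_n in Q_M (note x is not in Q_M,
   since x_M = 0 but the M-th coordinate of q_n is not 0).  In that case the tip (q_n, r_n)
   of the arc at q_n is in L_(M+1), and its distance to x is
   theta_(r_n)(r_n, 0) + rho_M(q_n, x) = r_n theta(gamma 1, gamma 0) + rho_M(q_n, x),
   which is small because r_n <= 2^-M. *)

Record pseudometric {T : Type} (d : T -> T -> R) : Prop := {
  pm_refl : forall x, d x x = 0;
  pm_sym : forall x y, d x y = d y x;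
  pm_nonneg : forall x y, 0 <= d x y;
  pm_triangle : forall x y z, d x z <= d x y + d y z }.

Ltac case_dec := unfold dec; repeat match goal with
  |- context [excluded_middle_informative ?P] => destruct (excluded_middle_informative P) end.

Definition finite_support (a : pt) : Prop := exists N, forall i, (N <= i)%nat -> a i = 0.

Lemma ex_series_finite_support a : finite_support a -> ex_series a.
Proof.
  intros [N HN]. apply (ex_series_incr_n a N).
  apply (ex_series_le (V := R_CompleteNormedModule) _ (fun k => (1/2) ^ k)).
  - intros k. rewrite HN by lia. change (Rabs 0 <= (1 / 2) ^ k). rewrite Rabs_R0. apply pow_le. lra.
  - apply ex_series_geom. rewrite Rabs_pos_eq; lra.
Qed.

Lemma finite_support_abs_sub a b :
  finite_support a -> finite_support b -> finite_support (fun i => Rabs (a i - b i)).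
Proof.
  intros [N HN] [M HM]. exists (N + M)%nat. intros i Hi.
  rewrite HN, HM by lia. rewrite Rminus_0_r. apply Rabs_R0.
Qed.

Lemma theta_refl a : theta a a = 0.
Proof.
  unfold theta. rewrite (Series_ext _ (fun _ => 0 * 0)).
  - rewrite Series_scal_l. ring.
  - intros i. rewrite Rminus_diag_eq, Rabs_R0 by reflexivity. ring.
Qed.

Lemma theta_sym a b : theta a b = theta b a.
Proof. apply Series_ext. intros i. apply Rabs_minus_sym. Qed.

Lemma theta_nonneg a b : finite_support a -> finite_support b -> 0 <= theta a b.
Proof.
  intros Ha Hb. rewrite <- (theta_refl a). apply Series_le.
  - intros i. rewrite Rminus_diag_eq, Rabs_R0 by reflexivity. split; [lra | apply Rabs_pos].
  - apply ex_series_finite_support, finite_support_abs_sub; assumption.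
Qed.

Lemma theta_triangle a b c : finite_support a -> finite_support b -> finite_support c ->
  theta a c <= theta a b + theta b c.
Proof.
  intros Ha Hb Hc. unfold theta.
  rewrite <- Series_plus by (apply ex_series_finite_support, finite_support_abs_sub; assumption).
  apply Series_le.
  - intros i. split; [apply Rabs_pos|].
    replace (a i - c i) with ((a i - b i) + (b i - c i)) by ring. apply Rabs_triang.
  - apply (ex_series_plus (fun i => Rabs (a i - b i)) (fun i => Rabs (b i - c i)));
      apply ex_series_finite_support, finite_support_abs_sub; assumption.
Qed.

Lemma gamma_finite_support s : finite_support (gamma s).
Proof.
  unfold gamma. destruct (Rlt_dec s 1).
  - set (n := epsilon _ _). exists (S n). intros i Hi.
    unfold piece, xn, e. rewrite (proj2 (Nat.eqb_neq i n)), (proj2 (Nat.eqb_neq i 0)) by lia. ring.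
  - exists 1%nat. intros [|i] Hi; [lia|]. unfold xinf, e. simpl. ring.
Qed.

Lemma theta_gamma_nonneg s t : 0 <= theta (gamma s) (gamma t).
Proof. apply theta_nonneg; apply gamma_finite_support. Qed.

Lemma theta_r_sym r a b : theta_r r a b = theta_r r b a.
Proof. unfold theta_r. rewrite theta_sym. reflexivity. Qed.

Lemma theta_r_pseudometric r : 0 <= r -> pseudometric (theta_r r).
Proof.
  intros Hr. unfold theta_r.
  split; intros.
  - rewrite theta_refl. ring.
  - apply theta_r_sym.
  - apply Rmult_le_pos; [assumption | apply theta_gamma_nonneg].
  - rewrite <- Rmult_plus_distr_l. apply Rmult_le_compat_l; [assumption|].
    apply theta_triangle; apply gamma_finite_support.
Qed.

Section Gluing.

Context {X T : Type}.
Variables (p : X -> T) (rho : T -> T -> R) (h : X -> R) (delta : X -> X -> R).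

Definition glue (x y : X) : R :=
  if dec (p x = p y) then delta x y else h x + rho (p x) (p y) + h y.

Hypothesis rho_pseudometric : pseudometric rho.
Hypothesis h_nonneg : forall x, 0 <= h x.
Hypothesis delta_refl : forall x, delta x x = 0.
Hypothesis delta_sym : forall x y, p x = p y -> delta x y = delta y x.
Hypothesis delta_nonneg : forall x y, p x = p y -> 0 <= delta x y.
Hypothesis delta_triangle :
  forall x y z, p x = p y -> p y = p z -> delta x z <= delta x y + delta y z.
Hypothesis delta_le_heights : forall x y, p x = p y -> delta x y <= h x + h y.
Hypothesis height_lipschitz : forall x y, p x = p y -> h x <= delta x y + h y.

Lemma glue_pseudometric : pseudometric glue.
Proof.
  destruct rho_pseudometric as [rho_refl rho_sym rho_nonneg rho_triangle].
  unfold glue. split.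
  - intros x. case_dec; [apply delta_refl | congruence].
  - intros x y. case_dec; try congruence.
    + apply delta_sym. assumption.
    + rewrite rho_sym. ring.
  - intros x y. case_dec.
    + apply delta_nonneg. assumption.
    + pose proof (h_nonneg x). pose proof (h_nonneg y). pose proof (rho_nonneg (p x) (p y)). lra.
  - intros x y z. case_dec; try congruence.
    + apply delta_triangle; assumption.
    + pose proof (delta_le_heights x z ltac:(assumption)).
      pose proof (h_nonneg y). pose proof (rho_nonneg (p x) (p y)).
      pose proof (rho_nonneg (p y) (p z)). lra.
    + pose proof (height_lipschitz x y ltac:(assumption)).
      replace (p x) with (p y) by congruence. lra.
    + pose proof (height_lipschitz z y ltac:(congruence)).
      rewrite (delta_sym y z) by assumption.
      replace (p z) with (p y) by congruence. lra.
    + pose proof (rho_triangle (p x) (p y) (p z)). pose proof (h_nonneg y). lra.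
Qed.

End Gluing.

Lemma pseudometric_comap {X Y : Type} (f : X -> Y) (d : Y -> Y -> R) :
  pseudometric d -> pseudometric (fun x y => d (f x) (f y)).
Proof. intros [Hr Hs Hn Ht]. split; intros; auto. Qed.

Lemma rr_pos m n : 0 < rr m n.
Proof. apply Rinv_0_lt_compat, pow_lt. lra. Qed.

Lemma theta_rr_pseudometric m n : pseudometric (theta_r (rr m n)).
Proof. apply theta_r_pseudometric, Rlt_le, rr_pos. Qed.

(* A point x of stage [S m] lies over its foot [trunc (m + 1) x] of stage [m].  When the foot
   is [q m n], x lies on the arc attached there, at [height] [theta_r (rr m n) (x (m + 1)) 0]
   above it; [rhonext] glues these arcs onto [rho] (see [rhonext_eq_glue]). *)
Definition height (q : choice_data) (m : nat) (x : pt) : R :=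
  let x' := trunc (m + 1) x in
  if dec (inQ q m x') then theta_r (rr m (idxQ q m x')) (x (m + 1)%nat) 0 else 0.

Definition fiber_dist (q : choice_data) (m : nat) (rho : pt -> pt -> R) (x y : pt) : R :=
  let x' := trunc (m + 1) x in
  if dec (inQ q m x') then theta_r (rr m (idxQ q m x')) (x (m + 1)%nat) (y (m + 1)%nat)
  else rho x' (trunc (m + 1) y).

Lemma rhonext_eq_glue q m rho :
  rhonext q m rho = glue (trunc (m + 1)) rho (height q m) (fiber_dist q m rho).
Proof.
  apply functional_extensionality; intros x; apply functional_extensionality; intros y.
  unfold rhonext, glue, height, fiber_dist. cbv zeta.
  case_dec; try congruence; rewrite ?(theta_r_sym _ 0); ring.
Qed.

Lemma height_nonneg q m x : 0 <= height q m x.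
Proof.
  unfold height. case_dec; [apply theta_rr_pseudometric | lra].
Qed.

Lemma height_zero q m x : x (m + 1)%nat = 0 -> height q m x = 0.
Proof.
  intros Hx. unfold height. rewrite Hx. case_dec; [apply theta_rr_pseudometric | reflexivity].
Qed.

Lemma fiber_dist_refl q m rho x : pseudometric rho -> fiber_dist q m rho x x = 0.
Proof.
  intros Hrho. unfold fiber_dist. case_dec; [apply theta_rr_pseudometric | apply Hrho].
Qed.

Lemma rhonext_pseudometric q m rho : pseudometric rho -> pseudometric (rhonext q m rho).
Proof.
  intros Hrho. rewrite rhonext_eq_glue.
  apply glue_pseudometric; try assumption.
  - apply height_nonneg.
  - intros x. apply fiber_dist_refl. assumption.
  - intros x y E. unfold fiber_dist. rewrite E.
    case_dec; [apply theta_rr_pseudometric | reflexivity].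
  - intros x y E. unfold fiber_dist. case_dec; [apply theta_rr_pseudometric | apply Hrho].
  - intros x y z E1 E2. unfold fiber_dist. rewrite E1, E2.
    case_dec; [apply theta_rr_pseudometric | apply Hrho].
  - intros x y E. unfold fiber_dist, height. rewrite E. case_dec.
    + destruct (theta_rr_pseudometric m (idxQ q m (trunc (m + 1) y))) as [_ Hs _ Ht].
      rewrite (Hs (y (m + 1)%nat) 0). apply Ht.
    + rewrite (pm_refl _ Hrho). lra.
  - intros x y E. unfold fiber_dist, height. rewrite E. case_dec.
    + apply theta_rr_pseudometric.
    + pose proof (pm_nonneg _ Hrho (trunc (m + 1) y) (trunc (m + 1) y)). lra.
Qed.

Lemma Pk_S q m : Pk q (S m) = Pnext q m (Pk q m).
Proof. unfold Pk; simpl. destruct (stage q m) as [[P rho] L]. reflexivity. Qed.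

Lemma rhok_S q m : rhok q (S m) = rhonext q m (rhok q m).
Proof. unfold rhok; simpl. destruct (stage q m) as [[P rho] L]. reflexivity. Qed.

Lemma Lk_S q m : Lk q (S m) = Lnext q m (Lk q m).
Proof. unfold Lk; simpl. destruct (stage q m) as [[P rho] L]. reflexivity. Qed.

Lemma rhok_pseudometric q m : pseudometric (rhok q m).
Proof.
  induction m as [|m IH].
  - exact (pseudometric_comap (fun x => x O) _ (theta_r_pseudometric 1 ltac:(lra))).
  - rewrite rhok_S. apply rhonext_pseudometric, IH.
Qed.

Lemma Pk_support q m x : Pk q m x -> forall j, (m < j)%nat -> x j = 0.
Proof.
  destruct m as [|m].
  - intros [_ H] j Hj. apply H. lia.
  - rewrite Pk_S. intros [H _] j Hj. apply H. lia.
Qed.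

Lemma trunc_of_support m x : (forall j, (m < j)%nat -> x j = 0) -> trunc (m + 1) x = x.
Proof.
  intros H. apply functional_extensionality. intros j. unfold trunc.
  destruct (Nat.ltb_spec j (m + 1)); [reflexivity|]. symmetry. apply H. lia.
Qed.

Lemma Pk_succ q m x : Pk q m x -> Pk q (S m) x.
Proof.
  intros Hx. pose proof (Pk_support q m x Hx) as Hs. rewrite Pk_S. split.
  - intros j Hj. apply Hs. lia.
  - rewrite (trunc_of_support m x Hs). destruct (classic (inQ q m x)) as [[n Hn]|Hn].
    + right. exists n. split; [assumption|]. rewrite Hs by lia. pose proof (rr_pos m n). lra.
    + left. split; [apply Hs; lia|]. split; assumption.
Qed.

Lemma rhok_succ q m x y : Pk q m x -> Pk q m y -> rhok q (S m) x y = rhok q m x y.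
Proof.
  intros Hx Hy. pose proof (Pk_support q m x Hx) as Hsx. pose proof (Pk_support q m y Hy) as Hsy.
  rewrite rhok_S, rhonext_eq_glue. unfold glue.
  rewrite !height_zero by (apply Hsx || apply Hsy; lia).
  rewrite (trunc_of_support m x Hsx), (trunc_of_support m y Hsy). case_dec.
  - subst y. rewrite fiber_dist_refl, (pm_refl _ (rhok_pseudometric q m)); [reflexivity|].
    apply rhok_pseudometric.
  - ring.
Qed.

Lemma Pk_mono q m M x : (m <= M)%nat -> Pk q m x -> Pk q M x.
Proof. induction 1; auto using Pk_succ. Qed.

Lemma rhok_mono q m M x y :
  (m <= M)%nat -> Pk q m x -> Pk q m y -> rhok q M x y = rhok q m x y.
Proof.
  induction 1 as [|M HmM IH]; intros Hx Hy; [reflexivity|].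
  rewrite rhok_succ by (apply (Pk_mono q m); assumption). apply IH; assumption.
Qed.

Lemma rho_inf_eq q M x y : Pk q M x -> Pk q M y -> rho_inf q x y = rhok q M x y.
Proof.
  intros Hx Hy. unfold rho_inf.
  set (m0 := epsilon _ _).
  assert (H : Pk q m0 x /\ Pk q m0 y) by (apply epsilon_spec; exists M; auto).
  destruct H as [Hx0 Hy0].
  rewrite <- (rhok_mono q m0 (Nat.max m0 M)), <- (rhok_mono q M (Nat.max m0 M));
    auto using Nat.le_max_l, Nat.le_max_r.
Qed.

Lemma rho_inf_triangle q x y z : Pinf_pre q x -> Pinf_pre q y -> Pinf_pre q z ->
  rho_inf q x z <= rho_inf q x y + rho_inf q y z.
Proof.
  intros [mx Hx] [my Hy] [mz Hz].
  set (M := Nat.max mx (Nat.max my mz)).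
  assert (HxM : Pk q M x) by (apply (Pk_mono q mx); [lia | assumption]).
  assert (HyM : Pk q M y) by (apply (Pk_mono q my); [lia | assumption]).
  assert (HzM : Pk q M z) by (apply (Pk_mono q mz); [lia | assumption]).
  rewrite !(rho_inf_eq q M) by assumption. apply rhok_pseudometric.
Qed.

Definition set_coord (x : pt) (j : nat) (c : R) : pt :=
  fun i => if Nat.eqb i j then c else x i.

Lemma trunc_set_coord x j c : trunc j (set_coord x j c) = trunc j x.
Proof.
  apply functional_extensionality. intros i. unfold trunc, set_coord.
  destruct (Nat.ltb_spec i j); [|reflexivity].
  rewrite (proj2 (Nat.eqb_neq i j)) by lia. reflexivity.
Qed.

Lemma idxQ_q q m n : (forall n n', q m n = q m n' -> n = n') -> idxQ q m (q m n) = n.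
Proof.
  intros Hinj. apply Hinj. symmetry. unfold idxQ.
  apply (epsilon_spec (inhabits 0%nat) (fun k => q m n = q m k)). exists n. reflexivity.
Qed.

Lemma not_inQ_of_coord_zero q m x : (forall n, q m n m <> 0) -> x m = 0 -> ~ inQ q m x.
Proof. intros Hnz Hx [n ->]. exact (Hnz n Hx). Qed.

Definition arc_tip (q : choice_data) (m n : nat) : pt := set_coord (q m n) (m + 1) (rr m n).

Section ArcTip.

Variables (q : choice_data) (m n : nat).
Hypothesis q_in_Pk : Pk q m (q m n).

Lemma trunc_arc_tip : trunc (m + 1) (arc_tip q m n) = q m n.
Proof.
  unfold arc_tip. rewrite trunc_set_coord.
  apply trunc_of_support, (Pk_support q m), q_in_Pk.
Qed.

Lemma arc_tip_support j : (m + 1 < j)%nat -> arc_tip q m n j = 0.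
Proof.
  intros Hj. unfold arc_tip, set_coord. rewrite (proj2 (Nat.eqb_neq j (m + 1))) by lia.
  apply (Pk_support q m); [exact q_in_Pk | lia].
Qed.

Lemma arc_tip_top : arc_tip q m n (m + 1)%nat = rr m n.
Proof. unfold arc_tip, set_coord. rewrite Nat.eqb_refl. reflexivity. Qed.

Lemma arc_tip_in_Pk : Pk q (S m) (arc_tip q m n).
Proof.
  rewrite Pk_S. split; [exact arc_tip_support|].
  right. exists n. rewrite trunc_arc_tip, arc_tip_top.
  pose proof (rr_pos m n). split; [reflexivity | lra].
Qed.

Lemma arc_tip_in_Lk : Lk q (S m) (arc_tip q m n).
Proof.
  rewrite Lk_S. split; [exact arc_tip_support|].
  right. exists n. split; [exact trunc_arc_tip | exact arc_tip_top].
Qed.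

Lemma rhok_arc_tip x :
  (forall n n', q m n = q m n' -> n = n') -> (forall n, q m n m <> 0) ->
  Pk q m x -> x m = 0 ->
  rhok q (S m) (arc_tip q m n) x = theta_r (rr m n) (rr m n) 0 + rhok q m (q m n) x.
Proof.
  intros Hinj Hnz Hx Hxm. pose proof (Pk_support q m x Hx) as Hsx.
  rewrite rhok_S, rhonext_eq_glue. unfold glue.
  rewrite (trunc_of_support m x Hsx), trunc_arc_tip.
  rewrite (height_zero q m x) by (apply Hsx; lia).
  assert (Hq : inQ q m (q m n)) by (exists n; reflexivity).
  assert (Hnx : ~ inQ q m x) by (apply not_inQ_of_coord_zero; assumption).
  unfold height. rewrite trunc_arc_tip, arc_tip_top, idxQ_q by assumption.
  case_dec; try congruence. ring.
Qed.

End ArcTip.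

Lemma theta_r_tip r : 0 < r -> theta_r r r 0 = r * theta (gamma 1) (gamma 0).
Proof.
  intros Hr. unfold theta_r.
  replace (r / r) with 1 by (field; lra). replace (0 / r) with 0 by (field; lra).
  reflexivity.
Qed.

Lemma rr_le_inv_pow2 m n : rr m n <= / 2 ^ m.
Proof.
  apply Rinv_le_contravar; [apply pow_lt; lra|].
  apply Rle_pow; [lra | lia].
Qed.

Lemma inv_pow2_mul_eventually_lt C eps : 0 <= C -> 0 < eps ->
  exists K, forall M, (K <= M)%nat -> / 2 ^ M * C < eps.
Proof.
  intros HC Heps.
  destruct (pow_lt_1_zero (/ 2) ltac:(rewrite Rabs_pos_eq; lra) (eps / (C + 1)))
    as [K HK]; [apply Rdiv_lt_0_compat; lra|].
  exists K. intros M HM. specialize (HK M HM).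
  rewrite Rabs_pos_eq, pow_inv in HK by (apply pow_le; lra).
  assert (H2 : 0 < / 2 ^ M) by (apply Rinv_0_lt_compat, pow_lt; lra).
  apply (Rmult_lt_compat_r (C + 1)) in HK; [|lra].
  replace (eps / (C + 1) * (C + 1)) with eps in HK by (field; lra).
  nra.
Qed.

Lemma arc_tip_near q (Hq : admissible q) M x eps :
  Pk q M x -> ~ Lk q M x -> x M = 0 -> 0 < eps ->
  exists l, Pk q (S M) l /\ Lk q (S M) l /\
    rhok q (S M) l x < / 2 ^ M * theta (gamma 1) (gamma 0) + eps.
Proof.
  intros Hx HnL Hx0 Heps.
  destruct (Hq M) as (HQ & Hinj & Hdense & _ & Hnz).
  destruct (Hdense x Hx HnL eps Heps) as [n Hn].
  pose proof (proj1 (HQ n)) as Hqn.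
  exists (arc_tip q M n). split; [apply arc_tip_in_Pk, Hqn|]. split; [apply arc_tip_in_Lk, Hqn|].
  rewrite rhok_arc_tip, theta_r_tip, (pm_sym _ (rhok_pseudometric q M)) by auto using rr_pos.
  pose proof (Rmult_le_compat_r _ _ _ (theta_gamma_nonneg 1 0) (rr_le_inv_pow2 M n)).
  lra.
Qed.

Lemma Linf_dense_pre q (Hq : admissible q) x eps : Pinf_pre q x -> 0 < eps ->
  exists l, Linf q l /\ Pinf_pre q l /\ rho_inf q l x < eps.
Proof.
  intros [m0 Hx] Heps.
  destruct (inv_pow2_mul_eventually_lt _ (eps / 2) (theta_gamma_nonneg 1 0)) as [K HK]; [lra|].
  set (M := (S m0 + K)%nat).
  assert (HxM : Pk q M x) by (apply (Pk_mono q m0); [lia | assumption]).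
  assert (Hx0 : x M = 0) by (apply (Pk_support q m0); [assumption | lia]).
  destruct (classic (Lk q M x)) as [HL | HnL].
  - exists x. split; [exists M; assumption|]. split; [exists M; assumption|].
    rewrite (rho_inf_eq q M), (pm_refl _ (rhok_pseudometric q M)) by assumption. assumption.
  - destruct (arc_tip_near q Hq M x (eps / 2) HxM HnL Hx0) as (l & HPl & HLl & Hl); [lra|].
    exists l. split; [exists (S M); assumption|]. split; [exists (S M); assumption|].
    rewrite (rho_inf_eq q (S M)) by first [assumption | apply Pk_succ; assumption].
    specialize (HK M ltac:(lia)). lra.
Qed.

Lemma real_Lim_seq_lt (f : nat -> R) N c eps :
  (forall j, (N <= j)%nat -> f j <= c) -> c < eps -> 0 < eps -> real (Lim_seq f) < eps.
Proof.
  intros Hf Hc Heps.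
  assert (Hle : Rbar_le (Lim_seq f) (Lim_seq (fun _ => c))) by (apply Lim_seq_le_loc; exists N; auto).
  rewrite Lim_seq_const in Hle.
  destruct (Lim_seq f); simpl in *; lra.
Qed.

Lemma dense_in_completion_of_dense q (S : pt -> Prop) :
  (forall x eps, Pinf_pre q x -> 0 < eps -> exists l, S l /\ Pinf_pre q l /\ rho_inf q l x < eps) ->
  dense_in_completion q S.
Proof.
  intros Hdense u [Hu Hcauchy] eps Heps.
  destruct (Hcauchy (eps / 4)) as [N HN]; [lra|].
  destruct (Hdense (u N) (eps / 2) (Hu N)) as (l & HSl & Hl & Hlu); [lra|].
  exists l. split; [assumption|].
  unfold completion_dist, embed.
  apply (real_Lim_seq_lt _ N (eps / 2 + eps / 4)); [|lra | assumption].
  intros j Hj.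
  pose proof (rho_inf_triangle q l (u N) (u j) Hl (Hu N) (Hu j)).
  pose proof (HN N j (le_n N) Hj). lra.
Qed.

Theorem proposition4p10 (q : choice_data) (Hq : admissible q) :
  dense_in_completion q (Linf q).
Proof.
  apply dense_in_completion_of_dense. intros x eps Hx Heps.
  exact (Linf_dense_pre q Hq x eps Hx Heps).
Qed.
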